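(* Let $D$ be an essential domain admitting an essential representation $\mathcal V$ such that the set $\{\mathfrak m_V\cap D: V\in\mathcal V\}$ of centers in $D$ of the valuation domains in $\mathcal V$ (where $\mathfrak m_V$ is the maximal ideal of $V$) is closed in $\operatorname{Spec}(D)$ with respect to the constructible topology. Then $D$ is a PvMD.
   Context: All rings are commutative with identity. For an integral domain $D$ with quotient field $K$ and a nonzero fractional ideal $I$, set $(D:I)=\{x\in K: xI\subseteq D\}$, $I^v=(D:(D:I))$, $I^t=\bigcup\{J^v: J\subseteq I \text{ finitely generated}\}$; $I$ is a $t$-ideal if $I=(0)$ or $I=I^t$; a $t$-maximal ideal is a $t$-ideal maximal among proper $t$-ideals. $D$ is a PvMD if $D_{\mathfrak m}$ is a valuation domain for every $t$-maximal ideal $\mathfrak m$. A valuation overring of $D$ is essential if it equals $D_{\mathfrak p}$ for some prime $\mathfrak p$; an essential representation of $D$ is a family of essential valuation overrings of $D$ with intersection $D$; $D$ is essential if it has one. The constructible topology on $\operatorname{Spec}(A)$ is the coarsest topology in which every $D(f)=\{\mathfrak p:f\notin\mathfrak p\}$ is clopen. *)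

(* An integral domain D is modelled as a subring of a field K
   which is its quotient field; ideals / fractional ideals / overrings are
   Prop-valued subsets of K. *)
From HB Require Import structures.
From mathcomp Require Import all_boot all_order all_algebra.
Set Implicit Arguments. Unset Strict Implicit. Unset Printing Implicit Defensive.
Import GRing.Theory.
Local Open Scope ring_scope.

Section Defs.
Variable K : fieldType.
Implicit Types (D I J P V : K -> Prop).

Definition subring D : Prop :=
  D 0 /\ D 1 /\ (forall x y, D x -> D y -> D (x - y)) /\
  (forall x y, D x -> D y -> D (x * y)).

Definition quotient_field_of D : Prop :=
  forall x : K, exists a b, D a /\ D b /\ b != 0 /\ x = a / b.

Definition domain_with_qf D : Prop := subring D /\ quotient_field_of D.

Definition is_ideal D I : Prop :=
  (forall x, I x -> D x) /\ I 0 /\ (forall x y, I x -> I y -> I (x + y)) /\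
  (forall d x, D d -> I x -> I (d * x)).

Definition prime_ideal D P : Prop :=
  is_ideal D P /\ ~ P 1 /\ (forall a b, D a -> D b -> P (a * b) -> P a \/ P b).

Definition colon D I : K -> Prop := fun x => forall y, I y -> D (x * y).
Definition vop D I : K -> Prop := colon D (colon D I).

Fixpoint span D (l : seq K) (x : K) : Prop :=
  match l with
  | [::] => x = 0
  | a :: l' => exists d y, D d /\ span D l' y /\ x = d * a + y
  end.

Definition top D I : K -> Prop :=
  fun x => exists l : seq K, (forall a, a \in l -> I a) /\ vop D (span D l) x.

Definition t_ideal D I : Prop :=
  (forall x, I x <-> x = 0) \/ (forall x, I x <-> top D I x).

Definition proper_ideal D I : Prop := is_ideal D I /\ exists x, D x /\ ~ I x.

Definition t_maximal D M : Prop :=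
  proper_ideal D M /\ t_ideal D M /\
  (forall J, proper_ideal D J -> t_ideal D J ->
     (forall x, M x -> J x) -> forall x, J x -> M x).

Definition loc D P : K -> Prop :=
  fun x => exists a s, D a /\ D s /\ s != 0 /\ ~ P s /\ x = a / s.

Definition valuation_domain V : Prop :=
  subring V /\ forall x : K, x != 0 -> V x \/ V x^-1.

Definition PvMD D : Prop :=
  forall M, t_maximal D M -> valuation_domain (loc D M).

Definition essential_valuation_overring D V : Prop :=
  valuation_domain V /\ (forall x, D x -> V x) /\
  exists p, prime_ideal D p /\ forall x, V x <-> loc D p x.

Definition essential_representation D (I : Type) (Vs : I -> K -> Prop) : Prop :=
  (forall i, essential_valuation_overring D (Vs i)) /\
  (forall x, D x <-> forall i, Vs i x).

Definition max_ideal V : K -> Prop := fun x => V x /\ ~ (x != 0 /\ V x^-1).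

Definition center D V : K -> Prop := fun x => D x /\ max_ideal V x.

(* Constructible topology on Spec(D): generated by the subbasis
   D(f), V(f) = Spec(D) \ D(f) (f in D); its basic opens are finite
   intersections of these. *)
Definition basic_open D (fs gs : seq K) (Q : K -> Prop) : Prop :=
  prime_ideal D Q /\ (forall f, f \in fs -> ~ Q f) /\ (forall g, g \in gs -> Q g).

Definition constructible_closed D (S : (K -> Prop) -> Prop) : Prop :=
  (forall Q, S Q -> prime_ideal D Q) /\
  forall P, prime_ideal D P -> ~ S P ->
    exists fs gs : seq K, (forall f, f \in fs -> D f) /\ (forall g, g \in gs -> D g) /\
      basic_open D fs gs P /\ (forall Q, basic_open D fs gs Q -> ~ S Q).

Definition centers D (I : Type) (Vs : I -> K -> Prop) : (K -> Prop) -> Prop :=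
  fun Q => exists i, forall x, Q x <-> center D (Vs i) x.

End Defs.

From Pilot Require Import Defs.
From mathcomp Require Import all_boot all_order all_algebra.
From mathcomp Require Import ring.
From mathcomp Require boolp classical_sets.
From Stdlib Require Import Classical.
Set Implicit Arguments. Unset Strict Implicit. Unset Printing Implicit Defensive.
Import GRing.Theory.
Local Open Scope ring_scope.

(* A t-maximal ideal M is prime, and no finite subset of M generates an ideal
   whose v-closure is D.  Since D is the intersection of the valuation
   overrings V in the representation, every finite subset of M therefore lies
   in the center of some V.  The constructible topology is compact and the set
   of centers is closed in it, so M itself lies in a center p, where V = D_p;
   then D_M is an overring of the valuation domain D_p, hence a valuation
   domain. *)

Section FiniteCharacter.
Variables (T : eqType) (Phi : seq T -> Prop).

Definition finitely (X : T -> Prop) : Prop :=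
  forall s, (forall c, c \in s -> X c) -> Phi s.

Lemma chain_fin_bound (F : (T -> Prop) -> Prop) (X0 : T -> Prop) :
  (forall X Y, F X -> F Y -> (forall t, X t -> Y t) \/ (forall t, Y t -> X t)) ->
  forall s : seq T, (forall c, c \in s -> (exists2 X, F X & X c) \/ X0 c) ->
  (forall c, c \in s -> X0 c) \/
  exists2 X, F X & forall c, c \in s -> X c \/ X0 c.
Proof.
move=> Ftot; elim=> [|c s IH] cs; first by left.
have [|s0|[X FX sX]] := IH; first by move=> d ds; apply: cs; rewrite inE ds orbT.
- case: (cs c (mem_head _ _)) => [[Y FY Yc]|X0c].
    by right; exists Y => // d /[!inE] /orP [/eqP -> |/s0]; [left|right].
  by left => d /[!inE] /orP [/eqP -> //|/s0].
- case: (cs c (mem_head _ _)) => [[Y FY Yc]|X0c].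
    case: (Ftot X Y FX FY) => [XY|YX].
      by right; exists Y => // d /[!inE] /orP [/eqP -> |/sX [/XY|]]; auto.
    by right; exists X => // d /[!inE] /orP [/eqP -> |/sX]; [left; apply: YX|].
  by right; exists X => // d /[!inE] /orP [/eqP -> |/sX]; [right|].
Qed.

Lemma finitely_maximal (X0 : T -> Prop) : finitely X0 ->
  exists U, (forall t, X0 t -> U t) /\ finitely U /\
    forall V, (forall t, U t -> V t) -> finitely V -> forall t, V t -> U t.
Proof.
move=> X0fin.
pose P X := finitely (fun t => X t \/ X0 t).
have [|A [PA Amax]] := @classical_sets.Zorn_bigcup T P.
  move=> F FP Ftot s sF.
  have [s0|[X FX sX]] := chain_fin_bound Ftot sF; first exact: X0fin.
  exact: FP X FX s sX.
exists (fun t => A t \/ X0 t); split; first by move=> t; right.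
split=> // V UV Vfin t Vt; apply: NNPP => nUt; apply: (Amax V).
  by split=> [u Au|VA]; [apply: UV; left | apply/nUt; left; apply: VA].
by move=> s sV; apply: Vfin => c /sV [] // X0c; apply: UV; right.
Qed.

End FiniteCharacter.

Section PatchCompactness.
Variables (K : fieldType) (D : K -> Prop) (I : Type) (C : I -> K -> Prop).
Hypothesis C_prime : forall i, prime_ideal D (C i).

(* The conditions [x \in P] and [x \notin P] on a prime [P] are encoded as
   [(true, x)] and [(false, x)]; finite lists of them cut out the basic open
   sets of the constructible topology. *)
Definition holds (P : K -> Prop) (c : bool * K) : Prop :=
  if c.1 then P c.2 else ~ P c.2.

Definition realized (s : seq (bool * K)) : Prop :=
  exists i, forall c, c \in s -> holds (C i) c.

Definition patch_adherent (Q : K -> Prop) : Prop := finitely realized (holds Q).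

Lemma patch_adherent_prime Q : patch_adherent Q -> prime_ideal D Q.
Proof.
move=> adQ.
have QD x : Q x -> D x.
  move=> Qx; have [|i hi] := adQ [:: (true, x)]; first by move=> c /[!inE] /eqP ->.
  by have [[CD _] _] := C_prime i; apply: CD; apply: (hi (true, x)); rewrite inE.
split; first (split=> //; split; [|split]).
- apply: NNPP => nQ0; have [|i hi] := adQ [:: (false, 0)].
    by move=> c /[!inE] /eqP ->.
  by have [[_ [C0 _]] _] := C_prime i; apply: (hi (false, 0)); rewrite ?inE.
- move=> x y Qx Qy; apply: NNPP => nQ.
  have [|i hi] := adQ [:: (true, x); (true, y); (false, x + y)].
    by move=> c /[!inE] /or3P [] /eqP ->.
  have [[_ [_ [CD _]]] _] := C_prime i.
  apply: (hi (false, x + y)); first by rewrite !inE eqxx !orbT.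
  by apply: CD; [apply: (hi (true, x)) | apply: (hi (true, y))];
    rewrite !inE eqxx ?orbT.
- move=> d x Dd Qx; apply: NNPP => nQ.
  have [|i hi] := adQ [:: (true, x); (false, d * x)].
    by move=> c /[!inE] /orP [] /eqP ->.
  have [[_ [_ [_ CM]]] _] := C_prime i.
  apply: (hi (false, d * x)); first by rewrite !inE eqxx orbT.
  by apply: CM => //; apply: (hi (true, x)); rewrite inE eqxx.
split.
- move=> Q1; have [|i hi] := adQ [:: (true, 1)]; first by move=> c /[!inE] /eqP ->.
  by have [_ [nC1 _]] := C_prime i; apply/nC1/(hi (true, 1)); rewrite inE.
- move=> a b Da Db Qab; apply: NNPP => /not_or_and [nQa nQb].
  have [|i hi] := adQ [:: (true, a * b); (false, a); (false, b)].
    by move=> c /[!inE] /or3P [] /eqP ->.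
  have [_ [_ Cp]] := C_prime i.
  have [|Ca|Cb] := Cp a b Da Db; first by apply: (hi (true, a * b)); rewrite inE eqxx.
  + by apply: (hi (false, a)) => //; rewrite !inE eqxx orbT.
  + by apply: (hi (false, b)) => //; rewrite !inE eqxx !orbT.
Qed.

Lemma patch_adherent_center Q :
  constructible_closed D (fun P => exists i, forall x, P x <-> C i x) ->
  patch_adherent Q -> exists i, forall x, Q x <-> C i x.
Proof.
move=> [_ closed] adQ; apply: NNPP => nQ.
have [fs [gs [_ [_ [[_ [fQ gQ]] Qisolated]]]]] :=
  closed Q (patch_adherent_prime adQ) nQ.
have [|i hi] := adQ ([seq (false, f) | f <- fs] ++ [seq (true, g) | g <- gs]).
  by move=> c /[!mem_cat] /orP [] /mapP [y ys ->] /=; [apply: fQ | apply: gQ].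
apply: (Qisolated (C i)); last by exists i.
split; first exact: C_prime.
split=> y ys.
- by apply: (hi (false, y)); rewrite mem_cat map_f.
- by apply: (hi (true, y)); rewrite mem_cat map_f ?orbT.
Qed.

Lemma realized_refute (U : bool * K -> Prop) (c : bool * K) :
  ~ finitely realized (fun d => U d \/ d = c) ->
  exists2 s : seq (bool * K), (forall d, d \in s -> U d) &
    forall i, (forall d, d \in s -> holds (C i) d) -> ~ holds (C i) c.
Proof.
move=> /not_all_ex_not [s] /(@imply_to_and _ (realized s)) [sUc ns].
exists [seq d <- s | d != c].
  by move=> d /[!mem_filter] /andP [/negPf dc /sUc [//|/eqP]]; rewrite dc.
move=> i hi hc; apply: ns; exists i => d ds.
by have [->//|dc] := eqVneq d c; apply: hi; rewrite mem_filter dc.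
Qed.

(* Maximality forces [U] to decide every [x], so [U] is exactly the set of
   conditions holding in [fun x => U (true, x)]. *)
Lemma maximal_realized_adherent (U : bool * K -> Prop) : finitely realized U ->
  (forall V, (forall c, U c -> V c) -> finitely realized V -> forall c, V c -> U c) ->
  patch_adherent (fun x => U (true, x)).
Proof.
move=> Ufin Umax.
have inconsistent c : ~ U c -> ~ finitely realized (fun d => U d \/ d = c).
  by move=> nUc Vfin; apply/nUc/(Umax _ _ Vfin); [move=> d; left | right].
have decide x : U (true, x) \/ U (false, x).
  apply: NNPP => /not_or_and [/inconsistent/realized_refute [s1 s1U r1]].
  move=> /inconsistent/realized_refute [s2 s2U r2].
  have [|i hi] := Ufin (s1 ++ s2); first by move=> d /[!mem_cat] /orP [/s1U|/s2U].
  have [Cx|nCx] := classic (C i x).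
  - by apply: (r1 i) => // d ds1; apply: hi; rewrite mem_cat ds1.
  - by apply: (r2 i) => // d ds2; apply: hi; rewrite mem_cat ds2 orbT.
move=> s sQ; apply: Ufin => -[[] x] /sQ //= nUx.
by case: (decide x).
Qed.

Lemma patch_compact (M : K -> Prop) :
  constructible_closed D (fun P => exists i, forall x, P x <-> C i x) ->
  (forall s : seq K, (forall x, x \in s -> M x) ->
     exists i, forall x, x \in s -> C i x) ->
  exists i, forall x, M x -> C i x.
Proof.
move=> closed Mfin.
have [|U [MU [Ufin Umax]]] := @finitely_maximal _ realized (fun c => c.1 /\ M c.2).
  move=> s sM; have [|i hi] := Mfin [seq c.2 | c <- s].
    by move=> x /mapP [c /sM [_ Mc] ->].
  by exists i => -[b x] cs; have [/= -> _] := sM _ cs; apply/hi/(map_f snd cs).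
have [i hi] := patch_adherent_center closed (maximal_realized_adherent Ufin Umax).
by exists i => x Mx; apply/hi/MU.
Qed.

End PatchCompactness.

Section Subring.
Variables (K : fieldType) (D : K -> Prop).
Hypothesis hD : subring D.

Lemma subring0 : D 0. Proof. by case: hD. Qed.
Lemma subring1 : D 1. Proof. by case: hD => _ []. Qed.

Lemma subringB x y : D x -> D y -> D (x - y).
Proof. by case: hD => _ [_ [DB _]]; apply: DB. Qed.

Lemma subringM x y : D x -> D y -> D (x * y).
Proof. by case: hD => _ [_ [_ DM]]; apply: DM. Qed.

Lemma subringD x y : D x -> D y -> D (x + y).
Proof.
by move=> Dx Dy; rewrite -[y]opprK -[- y]sub0r; apply/subringB/subringB/Dy/subring0.
Qed.

Lemma span0 l : Defs.span D l 0.
Proof.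
elim: l => [|b l IH] //=; exists 0, 0; rewrite mul0r addr0.
by split=> //; exact: subring0.
Qed.

Lemma span_mem l a : a \in l -> Defs.span D l a.
Proof.
elim: l => [|b l IH] //= /[!inE] /orP [/eqP ->|al].
  exists 1, 0; rewrite mul1r addr0.
  by split; [exact: subring1 | split; [exact: span0|]].
by exists 0, a; rewrite mul0r add0r; split; [exact: subring0 | split; [exact: IH|]].
Qed.

Lemma span_subring l : (forall a, a \in l -> D a) -> forall x, Defs.span D l x -> D x.
Proof.
elim: l => [|a l IH] /= Dl x; first by move=> ->; exact: subring0.
move=> [d [y [Dd [ly ->]]]]; apply: subringD.
  by apply: subringM => //; apply: Dl; rewrite inE eqxx.
by apply: IH ly => b bl; apply: Dl; rewrite inE bl orbT.
Qed.

Lemma span_scale a l x :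
  Defs.span D l x -> Defs.span D [seq a * b | b <- l] (a * x).
Proof.
elim: l x => [|b l IH] x /=; first by move=> ->; rewrite mulr0.
move=> [d [y [Dd [ly ->]]]]; exists d, (a * y).
by split=> //; split; [exact: IH | rewrite mulrDr mulrCA].
Qed.

Lemma top_ext J x : J x -> top D J x.
Proof.
move=> Jx; exists [:: x]; split; first by move=> a /[!inE] /eqP ->.
by move=> y Cy; rewrite mulrC; apply/Cy/span_mem; rewrite inE.
Qed.

Lemma top_subring J x : (forall a, J a -> D a) -> top D J x -> D x.
Proof.
move=> JD [l [lJ xv]]; rewrite -[x]mulr1; apply: xv => z lz.
by rewrite mul1r; apply: span_subring lz => a al; apply/JD/lJ.
Qed.

Lemma proper_ideal_not1 M : Defs.proper_ideal D M -> ~ M 1.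
Proof.
move=> [[_ [_ [_ MM]]] [x [Dx nMx]]] M1.
by apply: nMx; rewrite -[x]mulr1; exact: MM.
Qed.

Definition ideal_quotient (M : K -> Prop) (a : K) : K -> Prop :=
  fun x => D x /\ M (a * x).

Lemma ideal_quotient_proper M a :
  is_ideal D M -> ~ M a -> Defs.proper_ideal D (ideal_quotient M a).
Proof.
move=> [_ [M0 [MD MM]]] nMa; split; last first.
  by exists 1; split; [exact: subring1 | rewrite /ideal_quotient mulr1 => -[]].
split; first by move=> x [].
split; first by split; [exact: subring0 | rewrite mulr0].
split=> [x y [Dx Mx] [Dy My]|d x Dd [Dx Mx]].
  by split; [exact: subringD | rewrite mulrDr; exact: MD].
by split; [exact: subringM | rewrite mulrCA; exact: MM].
Qed.

Lemma ideal_quotient_t_ideal M a :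
  (forall x, M x <-> top D M x) -> t_ideal D (ideal_quotient M a).
Proof.
move=> Mt; right=> x; split; first exact: top_ext.
move=> xt; split; first by apply: top_subring xt => y [].
have [l [lJ xv]] := xt; apply/Mt; exists [seq a * b | b <- l]; split.
  by move=> c /mapP [y /lJ [_ May] ->].
move=> y Cy; have -> : a * x * y = x * (y * a) by ring.
by apply: xv => z lz; rewrite -mulrA; apply/Cy/span_scale.
Qed.

Lemma t_maximal_prime M : t_maximal D M -> prime_ideal D M.
Proof.
move=> [Mproper [[M0|Mt] Mmax]]; have [MI _] := Mproper.
  split=> //; split; first exact: proper_ideal_not1.
  by move=> a b _ _ /M0 /eqP; rewrite mulf_eq0 => /orP [] /eqP /M0; auto.
split=> //; split; first exact: proper_ideal_not1.
move=> a b Da Db Mab; have [Ma|nMa] := classic (M a); [by left | right].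
have [[MD [_ [_ MM]]] _] := Mproper.
apply: (Mmax _ (ideal_quotient_proper MI nMa) (ideal_quotient_t_ideal a Mt)) => //.
by move=> x Mx; split; [exact: MD | exact: MM].
Qed.

Lemma loc_subring M : prime_ideal D M -> subring (loc D M).
Proof.
move=> [_ [nM1 Mp]].
have nMM s t : D s -> D t -> ~ M s -> ~ M t -> ~ M (s * t).
  by move=> Ds Dt ns nt /(Mp _ _ Ds Dt) [].
have frac1 a : D a -> loc D M a.
  move=> Da; exists a, 1; rewrite divr1.
  by do !split=> //; [exact: subring1 | exact: oner_neq0].
split; first exact/frac1/subring0.
split; first exact/frac1/subring1.
split=> x y [a [s [Da [Ds [s0 [ns ->]]]]]] [b [t [Db [Dt [t0 [nt ->]]]]]].
  exists (a * t - b * s), (s * t); do !split; rewrite ?mulf_neq0 //.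
  - by apply: subringB; apply: subringM.
  - exact: subringM.
  - exact: nMM.
  - by field; rewrite s0 t0.
exists (a * b), (s * t); do !split; rewrite ?mulf_neq0 //.
- exact: subringM.
- exact: subringM.
- exact: nMM.
- by field; rewrite s0 t0.
Qed.

Lemma loc_antimono P Q : (forall x, Q x -> P x) ->
  forall x, loc D P x -> loc D Q x.
Proof.
move=> QP x [a [s [Da [Ds [s0 [nPs ->]]]]]].
have nQs : ~ Q s by move/QP.
by exists a, s.
Qed.

Lemma loc_zero_ideal M : quotient_field_of D -> (forall x, M x <-> x = 0) ->
  forall x, loc D M x.
Proof.
move=> qf M0 x; have [a [b [Da [Db [b0 ->]]]]] := qf x.
have nMb : ~ M b by move/M0/eqP; apply/negP.
by exists a, b.
Qed.

Lemma center_loc p V : prime_ideal D p -> (forall x, V x <-> loc D p x) ->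
  center D V = p.
Proof.
move=> [[pD [p0 [_ pM]]] [np1 _]] hV.
apply: boolp.funext => x; apply: boolp.propext; split.
- move=> [Dx [Vx nunit]]; apply: NNPP => npx.
  have x0 : x != 0 by apply/eqP => x0; apply: npx; rewrite x0.
  apply: nunit; split=> //; apply/hV.
  by exists 1, x; rewrite div1r; do !split=> //; exact: subring1.
- move=> px; split; first exact: pD.
  split; first by apply/hV; exists x, 1; rewrite divr1; do !split;
    [exact: pD | exact: subring1 | exact: oner_neq0 | exact: np1].
  move=> [x0 /hV [a [s [Da [Ds [s0 [nps xinv]]]]]]]; apply: nps.
  have -> : s = a * x by rewrite -[s]mulr1 -(mulVf x0) xinv; field.
  exact: pM.
Qed.

End Subring.

Lemma valuation_domain_overring (K : fieldType) (V W : K -> Prop) :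
  valuation_domain V -> subring W -> (forall x, V x -> W x) ->
  valuation_domain W.
Proof.
move=> [_ Vval] Wsub VW; split=> // x x0.
by case: (Vval x x0) => [/VW|/VW]; [left|right].
Qed.

Lemma valuation_domain_full (K : fieldType) (W : K -> Prop) :
  (forall x, W x) -> valuation_domain W.
Proof. by move=> Wx; split=> [|x _]; [do !split | left]. Qed.

Section EssentialRepresentation.
Variables (K : fieldType) (D : K -> Prop) (I : Type) (Vs : I -> K -> Prop).
Hypothesis hD : subring D.
Hypothesis hE : essential_representation D Vs.

Lemma essential_center_prime i : prime_ideal D (center D (Vs i)).
Proof. by have [_ [_ [p [pp hp]]]] := hE.1 i; rewrite (center_loc hD pp hp). Qed.

Lemma vop_span_one (s : seq K) : (forall x, x \in s -> D x) ->
  (forall i, exists2 x, x \in s & ~ center D (Vs i) x) ->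
  vop D (Defs.span D s) 1.
Proof.
move=> sD nonunit y Cy; rewrite mul1r; apply/hE.2 => i.
have [x xs nCx] := nonunit i.
have [[[_ [_ [_ VM]]] _] [DV _]] := hE.1 i.
have [x0 Vx'] : x != 0 /\ Vs i x^-1.
  by apply: NNPP => nu; apply: nCx; split; [exact: sD | split; [exact/DV/sD|]].
have -> : y = y * x * x^-1 by rewrite -mulrA mulfV ?mulr1.
by apply: VM Vx'; apply/DV/Cy/span_mem.
Qed.

(* A t-ideal containing a finite set that lies in no center would contain 1. *)
Lemma t_ideal_fin_center M : Defs.proper_ideal D M -> (forall x, top D M x -> M x) ->
  forall s : seq K, (forall x, x \in s -> M x) ->
  exists i, forall x, x \in s -> center D (Vs i) x.
Proof.
move=> Mproper Mt s sM; apply: NNPP => nfin.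
apply: (proper_ideal_not1 Mproper); apply: Mt; exists s; split=> //.
have [[MD _] _] := Mproper.
apply: vop_span_one => [x /sM /MD //|i].
apply: NNPP => nu; apply: nfin; exists i => x xs; apply: NNPP => nCx.
by apply: nu; exists x.
Qed.

End EssentialRepresentation.

Theorem corollary2p5 (K : fieldType) (D : K -> Prop) (I : Type) (Vs : I -> K -> Prop) :
  domain_with_qf D ->
  essential_representation D Vs ->
  constructible_closed D (centers D Vs) ->
  PvMD D.
Proof.
move=> [hD hqf] hE hC M tM.
have [Mproper [[M0|Mt] _]] := tM.
  exact/valuation_domain_full/loc_zero_ideal.
have [i MC] := patch_compact (essential_center_prime hD hE) hC
  (t_ideal_fin_center hD hE Mproper (fun x => (Mt x).2)).
have [Vval [_ [p [pp hp]]]] := hE.1 i.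
rewrite (center_loc hD pp hp) in MC.
apply: valuation_domain_overring Vval (loc_subring hD (t_maximal_prime hD tM)) _.
by move=> x /hp; apply: loc_antimono.
Qed.
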